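(* Let $n\geq 1$ and $N > n$, and consider the operator on symmetric polynomials in $x_1,\ldots,x_N$ $$D^\ast = \sum_{i=1}^N x_i^2\frac{\partial^2}{\partial x_i^2} + \sum_{i\neq j}\frac{1}{x_i-x_j}\left(x_i^2\frac{\partial}{\partial x_i} - x_j^2\frac{\partial}{\partial x_j}\right).$$ Then for every $\sigma\in P(n)$, $$\tfrac12 D^\ast(p_\sigma) = n(N-1)\,p_\sigma + \sum_{\lambda\in P(n)} (A_n)_{\sigma\lambda}\, p_\lambda;$$ that is, the matrix of $\frac12 D^\ast$ on the span of $\{p_\lambda\}_{\lambda\in P(n)}$ with respect to this basis (columns giving the coordinates of the images of basis vectors) is $A_n^T + n(N-1)I$.
   Context: $P(n)$ is the set of partitions of $n$. $p_r = \sum_{i=1}^N x_i^r$ and, for $\lambda = 1^{k_1}2^{k_2}\cdots$, $p_\lambda = p_1^{k_1}p_2^{k_2}\cdots$ (power sum symmetric polynomials). $A_n$ is the square matrix indexed by $P(n)$ whose $(\lambda,\sigma)$ entry is the number of transpositions $\tau\in S_n$ such that $\tau\alpha$ has cycle type $\sigma$, where $\alpha$ is any fixed permutation of cycle type $\lambda$. *)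

From HB Require Import structures.
From mathcomp Require Import all_boot all_order all_algebra all_fingroup.
From mathcomp Require Import mpoly.
Set Implicit Arguments. Unset Strict Implicit. Unset Printing Implicit Defensive.
Import GRing.Theory Num.Theory.
Local Open Scope ring_scope.

(* Partitions of n, encoded by multiplicities: lambda = 1^{k 0} 2^{k 1} ... n^{k (n-1)},
   i.e. k i = number of parts equal to i+1. *)
Definition mult_vec (n : nat) := {ffun 'I_n -> 'I_n.+1}.

Definition is_partition (n : nat) (k : mult_vec n) : bool :=
  (\sum_(i < n) (i.+1 * k i))%N == n.

Definition cycle_type (n : nat) (s : 'S_n) : mult_vec n :=
  [ffun i : 'I_n => inord #|[set c in porbits s | #|c| == i.+1]|].

Definition is_transposition (n : nat) (t : 'S_n) : bool :=
  [exists x : 'I_n, exists y : 'I_n, (x != y) && (t == tperm x y)].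

(* (A_n)_{lambda,sigma}: number of transpositions tau with tau*alpha of cycle type sigma,
   alpha a (chosen) permutation of cycle type lambda. *)
Definition A_entry (n : nat) (lam sig : mult_vec n) : nat :=
  match [pick a : 'S_n | cycle_type a == lam] with
  | Some a => #|[set t : 'S_n | is_transposition t &&
                   (cycle_type (t * a)%g == sig)]|
  | None => 0%N
  end.

Definition psum (R : comRingType) (N r : nat) : {mpoly R[N]} :=
  \sum_(i < N) 'X_i ^+ r.

Definition psum_part (R : comRingType) (N n : nat) (k : mult_vec n) : {mpoly R[N]} :=
  \prod_(i < n) psum R N i.+1 ^+ k i.

(* Dstar_is p q : q = D^*(p), where
   D^* = sum_i x_i^2 d^2/dx_i^2 + sum_{i<>j} (x_i^2 d/dx_i - x_j^2 d/dx_j)/(x_i - x_j).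
   The quotients are required to be exact polynomial quotients r i j. *)
Definition Dstar_is (R : comRingType) (N : nat) (p q : {mpoly R[N]}) : Prop :=
  exists r : 'I_N -> 'I_N -> {mpoly R[N]},
    (forall i j : 'I_N, i != j ->
       ('X_i - 'X_j) * r i j = 'X_i ^+ 2 * mderiv i p - 'X_j ^+ 2 * mderiv j p) /\
    q = \sum_(i < N) 'X_i ^+ 2 * mderiv i (mderiv i p)
        + \sum_(i < N) \sum_(j < N | j != i) r i j.

(* Realise [p_lambda] as [psum_perm a], the sum of the monomials [x^f] over the
   colourings [f : 'I_n -> 'I_N] constant on the cycles of a permutation [a] of
   cycle type [lambda].  The diagonal part [sum_i x_i^2 d_i^2] of [D^*]
   multiplies [x^f] by the number of ordered pairs [k != l] with [f k = f l];
   when [k] and [l] lie on different cycles these are exactly the colourings of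
   [tperm k l * a], whose cycles are those of [a] with the two merged.  The
   off-diagonal part is computed factor by factor from the exact quotient
   [(x_i^(r+1) - x_j^(r+1)) / (x_i - x_j)]; it yields [2 n (N - 1) p_lambda]
   plus, for each [r]-cycle, [r] times [sum_(0 < d < r) (p_d p_(r-d) - p_r)],
   which is the effect of the transpositions [tperm k l] with [l] on the cycle
   of [k]: they cut it into cycles of lengths [d] and [r - d].  Hence
   [D^* p_lambda = 2 n (N - 1) p_lambda + sum_(k != l) p_(type (tperm k l * a))],
   where every transposition occurs twice. *)

From HB Require Import structures.
From mathcomp Require Import all_boot all_order all_algebra all_fingroup.
From mathcomp Require Import mpoly ring zify.
Set Implicit Arguments. Unset Strict Implicit. Unset Printing Implicit Defensive.
Import GRing.Theory Num.Theory.

Section PermCycles.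
Variable T : finType.
Implicit Types (s : {perm T}) (x y : T) (c : {set T}).
Local Open Scope group_scope.

Lemma permXS s i x : (s ^+ i.+1) x = s ((s ^+ i) x).
Proof. by rewrite expgSr permM. Qed.

Lemma card_porbit_gt0 s x : 0 < #|porbit s x|.
Proof. by rewrite lt0n card_porbit_neq0. Qed.

Lemma permX_porbit_inj s x i j : i < #|porbit s x| -> j < #|porbit s x| ->
  (s ^+ i) x = (s ^+ j) x -> i = j.
Proof.
move=> ilt jlt; rewrite !permX => e; apply/eqP.
rewrite -(nth_uniq x _ _ (uniq_traject_porbit s x)) ?size_traject //.
by rewrite !nth_traject // e.
Qed.

Lemma permX_card_porbit s x : (s ^+ #|porbit s x|) x = x.
Proof. by rewrite permX iter_porbit. Qed.

Lemma permX_modn_porbit s x i : (s ^+ i) x = (s ^+ (i %% #|porbit s x|)) x.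
Proof.
rewrite {1}(divn_eq i #|porbit s x|) expgD permM.
elim: (i %/ _) => [|q IH]; first by rewrite mul0n expg0 perm1.
by rewrite mulSn expgD permM permX_card_porbit IH.
Qed.

Lemma porbitPlt s x y :
  reflect (exists2 i, i < #|porbit s x| & y = (s ^+ i) x) (y \in porbit s x).
Proof.
apply: (iffP idP) => [/porbitP [i ->]|[i _ ->]]; last exact: mem_porbit.
exists (i %% #|porbit s x|); first by rewrite ltn_pmod ?card_porbit_gt0.
exact: permX_modn_porbit.
Qed.

Lemma porbit_eq s x y : y \in porbit s x -> porbit s y = porbit s x.
Proof. by rewrite -eq_porbit_mem => /eqP. Qed.

Lemma porbit_app s x : porbit s (s x) = porbit s x.
Proof. by have := porbit_perm s 1 x; rewrite expg1. Qed.

Lemma mem_porbits s x : porbit s x \in porbits s.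
Proof. exact: imset_f. Qed.

Lemma porbits_eq s c x : c \in porbits s -> x \in c -> c = porbit s x.
Proof. by case/imsetP=> y _ -> /porbit_eq ->. Qed.

Lemma card_porbits_bounds s c : c \in porbits s -> 0 < #|c| <= #|T|.
Proof. by case/imsetP=> x _ ->; rewrite card_porbit_gt0 max_card. Qed.

Lemma sum_card_porbits s : \sum_(c in porbits s) #|c| = #|T|.
Proof.
have /eqP -> : trivIset (porbits s).
  apply/trivIsetP => _ _ /imsetP [x _ ->] /imsetP [y _ ->] neq_xy.
  apply/pred0P => z /=; apply: contraNF neq_xy => /andP [xz yz].
  by rewrite -(porbit_eq xz) -(porbit_eq yz).
suff -> : cover (porbits s) = [set: T] by rewrite cardsT.
apply/setP => z; rewrite inE; apply/bigcupP.
by exists (porbit s z); [exact: mem_porbits | exact: porbit_id].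
Qed.

Lemma porbit_sub_closed s (A : {set T}) x :
  (forall y, y \in A -> s y \in A) -> x \in A -> porbit s x \subset A.
Proof.
move=> sA xA; apply/subsetP => _ /porbitP [i ->].
by elim: i => [|i IH]; rewrite ?expg0 ?perm1 ?permXS ?sA.
Qed.

Section ConstOnCycles.
Variables (U : eqType) (f : T -> U).

Lemma const_porbit s x y : (forall z, f (s z) = f z) ->
  y \in porbit s x -> f y = f x.
Proof.
move=> fs /porbitP [i ->]; elim: i => [|i IH]; first by rewrite expg0 perm1.
by rewrite permXS fs.
Qed.

Lemma const_tperm_mul s k l : f k = f l ->
  (forall z, f ((tperm k l * s) z) = f z) <-> (forall z, f (s z) = f z).
Proof.
move=> fkl; have ft z : f (tperm k l z) = f z by case: tpermP => // ->.
split=> fs z; last by rewrite permM fs ft.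
by have := fs (tperm k l z); rewrite permM tpermK ft.
Qed.

(* [tperm k l * s] merges the cycles of [k] and [l] into one. *)
Lemma const_tperm_mul_merge s k l : l \notin porbit s k ->
  (forall z, f ((tperm k l * s) z) = f z) -> f k = f l.
Proof.
move=> lNk fs.
have kNl : k \notin porbit s l by rewrite porbit_sym.
have fsl : f (s l) = f k by rewrite -(fs k) permM tpermL.
suff fsX i : 0 < i <= #|porbit s l| -> f ((s ^+ i) l) = f (s l).
  have := fsX #|porbit s l|; rewrite card_porbit_gt0 leqnn permX_card_porbit.
  by rewrite fsl => ->.
elim: i => [//|[|i] IH] /andP [_ ilt]; first by rewrite expg1.
rewrite permXS -IH ?(ltnW ilt) // -(fs ((s ^+ i.+1) l)) permM tpermD //.
  by apply: contraNneq kNl => ->; exact: mem_porbit.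
have := permX_porbit_inj ilt (card_porbit_gt0 s l); rewrite expg0 perm1.
by rewrite eq_sym => inj; apply/eqP => /inj.
Qed.

End ConstOnCycles.
End PermCycles.

(* For [y = s^d x] on the cycle of [x], [tperm x y * s] cuts this cycle into
   the arc [s x, ..., y] and the rest [s y, ..., x]. *)
Section CycleSplit.
Variables (T : finType) (s : {perm T}) (x : T) (d : nat).
Hypotheses (d_gt0 : 0 < d) (d_lt : d < #|porbit s x|).
Local Open Scope group_scope.
Local Notation r := #|porbit s x|.
Local Notation C := (porbit s x).
Local Notation y := ((s ^+ d) x).
Local Notation t := (tperm x y * s).
Local Notation arc := [set (s ^+ j.+1) x | j : 'I_d].
Local Notation rest := (C :\: arc).

Let permX_inj i j := @permX_porbit_inj T s x i j.
Let r_gt0 : 0 < r := card_porbit_gt0 s x.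

Let card_arc : #|arc| = d.
Proof.
rewrite card_imset ?card_ord // => i j /permX_inj.
by rewrite !(leq_ltn_trans (ltn_ord _) d_lt) => /(_ isT isT) [] /val_inj.
Qed.

Let card_rest : #|rest| = r - d.
Proof.
rewrite cardsD; have /setIidPr -> : arc \subset C.
  by apply/subsetP => _ /imsetP [j _ ->]; exact: mem_porbit.
by rewrite card_arc.
Qed.

Let mem_arc i : i < r -> ((s ^+ i) x \in arc) = (0 < i <= d).
Proof.
move=> ilt; apply/imsetP/idP => [[j _ /permX_inj]|/andP [i_gt0 ile]].
  by move=> /(_ ilt (leq_ltn_trans (ltn_ord j) d_lt)) ->; exact: ltn_ord.
have ilt' : i.-1 < d by rewrite prednK.
by exists (Ordinal ilt'); rewrite //= prednK.
Qed.

Let x_notin_arc : x \notin arc.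
Proof. by have := mem_arc r_gt0; rewrite expg0 perm1 => ->. Qed.

Let sx_in_arc : s x \in arc.
Proof. by rewrite -{1}(expg1 s) mem_arc // (leq_ltn_trans d_gt0 d_lt). Qed.

Let mem_rest i : i <= r -> d < i -> (s ^+ i) x \in rest.
Proof.
move=> ile dlt; rewrite inE mem_porbit andbT.
case: (ltngtP i r) ile => // [ilt|->] _.
  2: by rewrite permX_card_porbit x_notin_arc.
by rewrite mem_arc // (leqNgt i d) dlt andbF.
Qed.

Let t_x : t x = (s ^+ d.+1) x.
Proof. by rewrite permM tpermL permXS. Qed.

Let t_y : t y = s x.
Proof. by rewrite permM tpermR. Qed.

Let t_permX i : i < r -> i != 0 -> i != d -> t ((s ^+ i) x) = (s ^+ i.+1) x.
Proof.
move=> ilt i0 id; rewrite permM tpermD ?permXS //.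
  apply: contra i0 => /eqP e; apply/eqP/(permX_inj ilt r_gt0).
  by rewrite expg0 perm1.
by apply: contra id => /eqP e; apply/eqP/(permX_inj ilt d_lt); rewrite e.
Qed.

Let porbit_t_arc : porbit t (s x) = arc.
Proof.
apply/eqP; rewrite eqEsubset porbit_sub_closed ?sx_in_arc //=; last first.
  move=> _ /imsetP [j _ ->]; case: (ltngtP j.+1 d) (ltn_ord j) => // [jd|->] _.
    rewrite t_permX ?(ltn_trans jd d_lt) ?(ltn_eqF jd) //.
    by rewrite mem_arc ?(leq_ltn_trans jd d_lt).
  by rewrite t_y sx_in_arc.
have tX j : j < d -> (t ^+ j) (s x) = (s ^+ j.+1) x.
  elim: j => [|j IH] jd; first by rewrite expg0 perm1 expg1.
  by rewrite permXS IH ?(ltnW jd) // t_permX ?(ltn_trans jd d_lt) ?(ltn_eqF jd).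
by apply/subsetP => _ /imsetP [j _ ->]; rewrite -tX //; exact: mem_porbit.
Qed.

Let porbit_t_rest : porbit t x = rest.
Proof.
have x_rest : x \in rest by rewrite inE porbit_id x_notin_arc.
apply/eqP; rewrite eqEsubset porbit_sub_closed //=; last first.
  move=> z /setDP [/porbitPlt [i ilt ->]].
  rewrite mem_arc //; case: (posnP i) => [->|i_gt0] /=.
    by rewrite expg0 perm1 t_x mem_rest.
  by rewrite -ltnNge => dlt; rewrite t_permX ?gtn_eqF // mem_rest // ltnW.
have tX j : d + j.+1 <= r -> (t ^+ j.+1) x = (s ^+ (d + j.+1)) x.
  elim: j => [|j IH] jr; first by rewrite expg1 t_x addn1.
  have m_lt : d + j.+1 < r by rewrite -addnS.
  have m_neq_d : d + j.+1 != d by rewrite addnS gtn_eqF // ltnS leq_addr.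
  by rewrite permXS (IH (ltnW m_lt)) t_permX // ?addnS.
apply/subsetP => z /setDP [/porbitPlt [i ilt ->]].
rewrite mem_arc //; case: (posnP i) => [->|i_gt0] /=.
  by rewrite expg0 perm1 porbit_id.
rewrite -ltnNge => dlt.
have i_eq : i = d + (i - d).-1.+1 by rewrite prednK ?subn_gt0 // subnKC // ltnW.
by rewrite i_eq -tX ?mem_porbit // -i_eq ltnW.
Qed.

Let porbit_t_out z : z \notin C -> porbit t z = porbit s z.
Proof.
move=> zNC; suff tX i : (t ^+ i) z = (s ^+ i) z.
  by apply/setP => w; apply/porbitP/porbitP => -[i ->]; exists i.
elim: i => [|i IH]; first by rewrite !expg0.
have sXz : (s ^+ i) z \notin C by rewrite porbit_sym porbit_perm -porbit_sym.
rewrite !permXS IH permM tpermD //; apply: contraNneq sXz => <-.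
  exact: porbit_id.
exact: mem_porbit.
Qed.

Let porbits_t : porbits t = (porbits s :\ C) :|: [set arc; rest].
Proof.
apply/setP => c; apply/imsetP/idP => [[z _ ->]|].
  rewrite !inE; have [zC|zNC] := boolP (z \in C).
    have [z_arc|z_Narc] := boolP (z \in arc).
      rewrite -porbit_t_arc in z_arc.
      by rewrite (porbit_eq z_arc) porbit_t_arc eqxx orbT.
    have z_rest : z \in porbit t x by rewrite porbit_t_rest inE z_Narc.
    by rewrite (porbit_eq z_rest) porbit_t_rest eqxx !orbT.
  rewrite porbit_t_out // imset_f // andbT; apply/orP; left.
  by apply: contraNneq zNC => <-; exact: porbit_id.
rewrite !inE => /orP [/andP [cNC /imsetP [z _ cz]]|/orP [] /eqP ->].
- exists z => //; rewrite cz porbit_t_out //.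
  by apply: contra cNC => zC; rewrite cz (porbit_eq zC).
- by exists (s x); rewrite ?porbit_t_arc.
- by exists x; rewrite ?porbit_t_rest.
Qed.

Lemma big_porbits_tperm_split (R : Type) (idx : R) (op : Monoid.com_law idx)
    (F : nat -> R) :
  \big[op/idx]_(c in porbits t) F #|c| =
  op (F d) (op (F (r - d)) (\big[op/idx]_(c in porbits s :\ C) F #|c|)).
Proof.
have arc_new : arc \notin porbits s :\ C.
  apply/setD1P => -[arcNC /porbits_eq /(_ sx_in_arc)].
  by rewrite porbit_app => arcC; rewrite arcC eqxx in arcNC.
have rest_new : rest \notin porbits s :\ C.
  have x_rest : x \in rest by rewrite inE porbit_id x_notin_arc.
  apply/setD1P => -[restNC /porbits_eq /(_ x_rest) restC].
  by rewrite restC eqxx in restNC.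
have arc_rest : arc != rest.
  by apply/eqP => e; have := sx_in_arc; rewrite {1}e inE sx_in_arc.
rewrite porbits_t setUC -setUA big_setU1 ?big_setU1 //= ?card_arc ?card_rest //.
by rewrite in_setU1 negb_or arc_rest.
Qed.

End CycleSplit.

Section CycleCounts.
Variable T : finType.

Definition ncycles (s : {perm T}) m := #|[set c in porbits s | #|c| == m]|.

Lemma ncyclesE s m : ncycles s m = \sum_(c in porbits s) (#|c| == m).
Proof.
rewrite /ncycles -sum1dep_card big_mkcondr /=.
by apply: eq_bigr => c _; case: (_ == _).
Qed.

Lemma ncycles_le_card s m : ncycles s m <= #|T|.
Proof.
rewrite /ncycles (leq_trans _ (leq_imset_card (porbit s) T)) // subset_leq_card //.
by apply/subsetP => c; rewrite inE => /andP [].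
Qed.

End CycleCounts.

Section PermOfCycleType.
Variable n : nat.
Local Open Scope group_scope.

Lemma full_cycle_exists : 0 < n -> exists s : 'S_n, porbits s = [set [set: 'I_n]].
Proof.
move=> n_gt0; pose s := perm (@ordS_inj n); pose o := Ordinal n_gt0.
have sX i : val ((s ^+ i) o) = i %% n.
  elim: i => [|i IH]; first by rewrite expg0 perm1 mod0n.
  by rewrite permXS permE /= IH -addn1 modnDml addn1.
have s_o : porbit s o = [set: 'I_n].
  apply/setP => y; rewrite inE; apply/porbitP; exists y.
  by apply/val_inj; rewrite sX modn_small.
exists s; apply/setP => c; rewrite inE; apply/imsetP/eqP => [[z _ ->]|->].
  by rewrite -s_o (porbit_eq (_ : z \in porbit s o)) // s_o.
by exists o; rewrite ?s_o.
Qed.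

Lemma perm_of_cycle_sizes (L : seq nat) : 0 < n -> all (leq 1) L -> sumn L = n ->
  exists s : 'S_n, forall m, ncycles s m = count_mem m L.
Proof.
move=> n_gt0; elim: {L}_.+1 {-2}L (ltnSn (size L)) => // k IH [|r1 [|r2 L]] /= sz.
- by move=> _ n0; rewrite -n0 in n_gt0.
- move=> _; rewrite addn0 => r1n; have [s s_full] := full_cycle_exists n_gt0.
  exists s => m; rewrite ncyclesE s_full big_set1 cardsT card_ord.
  by rewrite addn0 r1n eq_sym.
move=> /and3P [r1_gt0 r2_gt0 L_gt0] sumL.
(* Realise [r1 + r2 :: L], then cut a cycle of length [r1 + r2] in two. *)
have [s s_count] :
    exists s : 'S_n, forall m, ncycles s m = count_mem m (r1 + r2 :: L).
  apply: IH => /=; [by [] | | by rewrite -addnA].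
  by rewrite L_gt0 andbT (leq_trans r1_gt0) // leq_addr.
have : 0 < ncycles s (r1 + r2) by rewrite s_count /= eqxx.
rewrite card_gt0 => /set0Pn [_ /setIdP [/imsetP [x _ ->] /eqP sx]].
have d_lt : r1 < #|porbit s x| by rewrite sx -{1}(addn0 r1) ltn_add2l.
exists (tperm x ((s ^+ r1) x) * s) => m; have := s_count m.
rewrite !ncyclesE (big_setD1 (porbit s x)) ?imset_f //=.
rewrite (big_porbits_tperm_split r1_gt0 d_lt addn (fun k => nat_of_bool (k == m))).
by rewrite sx addKn /=; lia.
Qed.

Lemma cycle_typeE (s : 'S_n) (i : 'I_n) : cycle_type s i = ncycles s i.+1 :> nat.
Proof. by have := ncycles_le_card s i.+1; rewrite card_ord ffunE => /inordK. Qed.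

Lemma big_porbits_by_size (R : Type) (idx : R) (op : Monoid.com_law idx)
    (s : 'S_n) (F : nat -> R) :
  \big[op/idx]_(c in porbits s) F #|c| =
  \big[op/idx]_(i < n)
     \big[op/idx]_(c in [set c in porbits s | #|c| == i.+1]) F i.+1.
Proof.
under [RHS]eq_bigr => i _ do rewrite big_mkcond /=.
rewrite exchange_big /= big_mkcond; apply: eq_bigr => c _.
case: ifPn => sc; last by rewrite big1 // => i _; rewrite inE (negbTE sc).
have /andP [c_gt0 c_le] := card_porbits_bounds sc.
have c_lt : #|c|.-1 < n by rewrite card_ord in c_le; rewrite prednK.
rewrite (bigD1 (Ordinal c_lt)) //= inE sc prednK // eqxx.
rewrite big1 ?Monoid.mulm1 // => i /negbTE ic; rewrite inE sc /=.
by rewrite -(inj_eq val_inj) /= -eqSS prednK // eq_sym in ic; rewrite ic.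
Qed.

Lemma cycle_type_partition (s : 'S_n) : is_partition (cycle_type s).
Proof.
apply/eqP; rewrite -[RHS](card_ord n) -(sum_card_porbits s).
rewrite (big_porbits_by_size addn s id); apply: eq_bigr => i _.
by rewrite cycle_typeE sum_nat_const mulnC.
Qed.

Lemma cycle_type_exists (lam : mult_vec n) : 0 < n -> is_partition lam ->
  exists s : 'S_n, cycle_type s = lam.
Proof.
move=> n_gt0 /eqP lam_n.
pose L := flatten [seq nseq (lam i) i.+1 | i : 'I_n].
have countL m : count_mem m L = \sum_(i < n) (i.+1 == m) * lam i.
  rewrite count_flatten sumnE !big_map -enumT big_enum /=.
  by apply: eq_bigr => i _; rewrite count_nseq.
have sumL : sumn L = n.
  rewrite sumn_flatten sumnE !big_map -enumT big_enum /= -[RHS]lam_n.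
  by apply: eq_bigr => i _; rewrite sumn_nseq mulnC.
have L_gt0 : all (leq 1) L.
  by apply/allP => m /flattenP [_ /mapP [i _ ->] /nseqP [->]].
have [s s_count] := perm_of_cycle_sizes n_gt0 L_gt0 sumL.
exists s; apply/ffunP => i; apply/val_inj.
rewrite /= cycle_typeE s_count countL (bigD1 i) //= eqxx mul1n big1 ?addn0 //.
by move=> j /negbTE ji; rewrite eqSS -[_ == _]/(j == i :> nat) (inj_eq val_inj) ji.
Qed.

End PermOfCycleType.

Local Open Scope ring_scope.

Section DerivationProd.
Variables (A : comNzRingType) (D : A -> A).
Hypothesis DM : forall u v, D (u * v) = D u * v + u * D v.

Lemma derivation_prod (I : finType) (S : {set I}) (g : I -> A) :
  D (\prod_(i in S) g i) = \sum_(i in S) D (g i) * \prod_(j in S :\ i) g j.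
Proof.
have D1 : D 1 = 0.
  by apply: (@addrI _ (D 1)); rewrite addr0 -[in RHS](mulr1 1) DM mulr1 mul1r.
elim: {S}_.+1 {-2}S (ltnSn #|S|) => // m IH S leS.
have [->|[x xS]] := set_0Vmem S; first by rewrite !big_set0.
rewrite !(big_setD1 x xS) DM IH /=; last first.
  by rewrite -ltnS (leq_trans _ leS) // (cardsD1 x S) xS.
congr (_ + _); rewrite big_distrr /=; apply: eq_bigr => i /setD1P [ix iS].
rewrite [in RHS](big_setD1 x); last by rewrite !inE eq_sym ix.
by rewrite mulrCA setDDl setUC -setDDl.
Qed.

End DerivationProd.

Section PowerSums.
Variables (R : comNzRingType) (N : nat).
Local Notation MP := {mpoly R[N]}.
Local Notation p := (psum R N).
Implicit Types (i j k : 'I_N).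

Lemma mderivX1 i j : mderiv i ('X_j : MP) = (j == i)%:R.
Proof.
rewrite mderivX mnm1E; case: eqP => [->|_]; last by rewrite scale0r.
have -> : (U_(i) - U_(i))%MM = 0%MM by apply/mnmP => l; rewrite mnmBE subnn mnm0E.
by rewrite mpolyX0 scale1r.
Qed.

Lemma mderivXn i k r :
  mderiv i ('X_k ^+ r : MP) = (k == i)%:R * (r%:R * 'X_k ^+ r.-1).
Proof.
elim: r => [|r IH]; first by rewrite expr0 mderivC mul0r mulr0.
rewrite exprS mderivM IH mderivX1; case: r IH => [|r] _ /=.
  by rewrite !mul0r !mulr0 addr0 mul1r.
rewrite -[r.+2]addn1 natrD exprS; ring.
Qed.

Lemma X2_mderiv_psum i r : 'X_i ^+ 2 * mderiv i (p r) = r%:R * 'X_i ^+ r.+1.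
Proof.
rewrite /psum raddf_sum (bigD1 i) //= mderivXn eqxx mul1r big1 ?addr0; last first.
  by move=> k /negbTE ki; rewrite mderivXn ki mul0r.
by case: r => [|r]; rewrite ?mul0r ?mulr0 // mulrCA -exprD.
Qed.

Definition Dstar_diag (q : MP) := \sum_i 'X_i ^+ 2 * mderiv i (mderiv i q).

Definition Dstar_num i j (q : MP) :=
  'X_i ^+ 2 * mderiv i q - 'X_j ^+ 2 * mderiv j q.

Lemma Dstar_numM i j u v :
  Dstar_num i j (u * v) = Dstar_num i j u * v + u * Dstar_num i j v.
Proof. by rewrite /Dstar_num !mderivM; ring. Qed.

Definition psum_quot i j r : MP :=
  r%:R * \sum_(a < r.+1) 'X_i ^+ (r - a) * 'X_j ^+ a.

Lemma psum_quotP i j r : ('X_i - 'X_j) * psum_quot i j r = Dstar_num i j (p r).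
Proof.
by rewrite /Dstar_num !X2_mderiv_psum /psum_quot mulrCA -subrXX; ring.
Qed.

Lemma sum_offdiag u v :
  \sum_i \sum_(j | j != i) ('X_i ^+ u * 'X_j ^+ v : MP) = p u * p v - p (u + v).
Proof.
rewrite /psum big_distrl /= -sumrB; apply: eq_bigr => i _.
by rewrite big_distrr /= [in RHS](bigD1 i) //= -exprD addrAC subrr add0r.
Qed.

Lemma psum0 : p 0 = N%:R.
Proof. by rewrite /psum (eq_bigr (fun=> 1)) ?sumr_const ?card_ord. Qed.

Definition cut_defect r := \sum_(d < r | (0 < d)%N) (p d * p (r - d) - p r).

(* The terms [a = 0] and [a = r] give [2 (p_0 - 1) p_r], and [p_0 = N]. *)
Lemma sum_psum_conv r : (0 < r)%N ->
  \sum_(a < r.+1) (p (r - a) * p a - p r) = (N%:R - 1) * p r *+ 2 + cut_defect r.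
Proof.
case: r => // r _; rewrite big_ord_recl big_ord_recr /= subn0 subnn psum0.
rewrite /cut_defect [in RHS]big_mkcond [in RHS]big_ord_recl /= add0r.
under [in RHS]eq_bigr => a _ do rewrite mulrC.
by rewrite [bump 0 r]/bump /= mulr2n; ring.
Qed.

End PowerSums.

Section SetProducts.
Variables (R : comNzRingType) (N : nat) (T : finType).
Local Notation MP := {mpoly R[N]}.
Local Notation p := (psum R N).
Implicit Types (i j : 'I_N) (P : {set {set T}}).

Definition psum_prod P : MP := \prod_(c in P) p #|c|.

Definition psum_prod_quot i j P : MP :=
  \sum_(c in P) psum_quot R i j #|c| * \prod_(c' in P :\ c) p #|c'|.

Lemma psum_prod_quotP i j P :
  ('X_i - 'X_j) * psum_prod_quot i j P = Dstar_num i j (psum_prod P).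
Proof.
rewrite /psum_prod (derivation_prod (@Dstar_numM R N i j)).
by rewrite big_distrr /=; apply: eq_bigr => c _; rewrite mulrA psum_quotP.
Qed.

Lemma sum_psum_prod_quot P : \sum_i \sum_(j | j != i) psum_prod_quot i j P =
  \sum_(c in P) #|c|%:R * (\sum_(a < #|c|.+1) (p (#|c| - a) * p a - p #|c|)) *
    \prod_(c' in P :\ c) p #|c'|.
Proof.
rewrite /psum_prod_quot; under eq_bigr => i _ do rewrite exchange_big /=.
rewrite exchange_big /=; apply: eq_bigr => c _.
under eq_bigr => i _ do rewrite -big_distrl /=.
rewrite -big_distrl /=; congr (_ * _); rewrite /psum_quot.
under eq_bigr => i _ do rewrite -big_distrr /=.
rewrite -big_distrr /=; congr (_ * _).
under eq_bigr => i _ do rewrite exchange_big /=.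
rewrite exchange_big /=; apply: eq_bigr => a _.
by rewrite sum_offdiag subnK // -ltnS.
Qed.

End SetProducts.

Section Colourings.
Variables (R : comNzRingType) (N : nat) (T : finType).
Local Notation MP := {mpoly R[N]}.
Local Notation colouring := {ffun T -> 'I_N}.
Implicit Types (f : colouring) (i : 'I_N) (s : {perm T}).

Definition monomial f : MP := \prod_(k : T) 'X_(f k).

Lemma Xmderiv_monomial f i :
  'X_i * mderiv i (monomial f) = (\sum_k (f k == i))%:R * monomial f.
Proof.
have big_setT (V : Type) (idx : V) (op : Monoid.com_law idx) (F : T -> V) :
    \big[op/idx]_(k in [set: T]) F k = \big[op/idx]_k F k.
  by apply: eq_bigl => k; rewrite inE.
rewrite /monomial -[in LHS]big_setT (derivation_prod (@mderivM N R i)).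
rewrite [in LHS]big_setT.
rewrite natr_sum big_distrl big_distrr /=; apply: eq_bigr => k _.
rewrite mderivX1; case: eqP => [<-|_]; last by rewrite !mul0r mulr0.
by rewrite !mul1r -big_setT (big_setD1 _ (in_setT k)).
Qed.

(* With [x^2 d^2 = (x d)^2 - x d], where [x_i d_i] multiplies [monomial f] by
   the number [m_i] of points of colour [i], the eigenvalue is
   [sum_i m_i (m_i - 1)], the number of ordered pairs of distinct points of
   equal colour. *)
Lemma Dstar_diag_monomial f : Dstar_diag (monomial f) =
  (\sum_k \sum_(l | l != k) (f k == f l))%:R * monomial f.
Proof.
have euler2 i (q : MP) : 'X_i ^+ 2 * mderiv i (mderiv i q) =
    'X_i * mderiv i ('X_i * mderiv i q) - 'X_i * mderiv i q.
  by rewrite mderivM mderivX1 eqxx /=; ring.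
pose m i := (\sum_k (f k == i))%N.
have sum_m : (\sum_i m i)%N = #|T|.
  rewrite exchange_big /= -sum1_card; apply: eq_bigr => k _.
  by rewrite (bigD1 (f k)) //= eqxx big1 // => i /negbTE; rewrite eq_sym => ->.
have sum_m2 :
    (\sum_i m i * m i = #|T| + \sum_k \sum_(l | l != k) (f k == f l))%N.
  under eq_bigr => i _ do rewrite big_distrl /=.
  rewrite exchange_big -sum1_card -big_split /=; apply: eq_bigr => k _.
  under eq_bigr => i _ do rewrite big_distrr /=.
  have delta a b : (\sum_i (a == i) * (b == i))%N = (a == b).
    rewrite (bigD1 a) //= eqxx mul1n big1 ?addn0 1?eq_sym // => i /negbTE.
    by rewrite eq_sym => ->.
  rewrite exchange_big /= (bigD1 k) //= delta eqxx add1n; congr _.+1.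
  by apply: eq_bigr => l _; rewrite delta.
have mderiv_natl i c (q : MP) : mderiv i (c%:R * q) = c%:R * mderiv i q.
  by rewrite !mulr_natl mderivMn.
have term i : 'X_i ^+ 2 * mderiv i (mderiv i (monomial f)) =
    ((m i * m i)%:R - (m i)%:R) * monomial f.
  rewrite euler2 Xmderiv_monomial mderiv_natl mulrCA Xmderiv_monomial.
  by rewrite mulrA -natrM -mulrBl.
rewrite /Dstar_diag (eq_bigr _ (fun i _ => term i)) -big_distrl /= sumrB.
by rewrite -!natr_sum sum_m sum_m2 natrD addrC addKr.
Qed.

Definition const_on_cycles s f := [forall z, f (s z) == f z].

Lemma const_on_cyclesP s f :
  reflect (forall z, f (s z) = f z) (const_on_cycles s f).
Proof. by apply: (iffP forallP) => fs z; apply/eqP. Qed.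

Definition psum_perm s : MP := \sum_(f | const_on_cycles s f) monomial f.

(* A colouring constant on the cycles of [s] is a colouring of [porbits s],
   and expanding [psum_prod] chooses one colour per cycle. *)
Lemma psum_permE s : (0 < N)%N -> psum_perm s = psum_prod R N (porbits s).
Proof.
move=> N_gt0; pose i0 := Ordinal N_gt0; pose P := porbits s.
pose lift (g : {ffun {set T} -> 'I_N}) : colouring := [ffun x => g (porbit s x)].
pose restr f : {ffun {set T} -> 'I_N} :=
  [ffun c => if c \in P then oapp f i0 [pick x in c] else i0].
have pickP c : c \in P -> exists2 x, [pick x in c] = Some x & porbit s x = c.
  move=> cP; case: pickP => [x xc|].
    by exists x; rewrite // (porbits_eq cP xc).
  by case/imsetP: cP => y _ -> /(_ y); rewrite porbit_id.
rewrite /psum_perm (reindex_onto lift restr); last first.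
  move=> f /const_on_cyclesP fs; apply/ffunP => x; rewrite !ffunE mem_porbits.
  have [y -> yx] := pickP _ (mem_porbits s x).
  by rewrite /= (const_porbit (x := x) fs) // -yx porbit_id.
have psumE (c : {set T}) : psum R N #|c| = \sum_i \prod_(x in c) ('X_i : MP).
  by rewrite /psum; apply: eq_bigr => i _; rewrite prodr_const.
rewrite /psum_prod (eq_bigr _ (fun c _ => psumE c)) (big_distr_big_dep i0) /=.
apply: eq_big => [g|g _].
  have /const_on_cyclesP -> /= : forall z, lift g (s z) = lift g z.
    by move=> z; rewrite !ffunE porbit_app.
  apply/eqP/pfamilyP => [<-|[g_sup _]].
    split=> //; apply/subsetP => c; rewrite inE.
    by apply: contraR => cNP; rewrite !ffunE (negbTE cNP).
  apply/ffunP => c; rewrite !ffunE; case: ifP => [cP|cNP].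
    by have [y -> yc] := pickP c cP; rewrite /= ffunE yc.
  apply/eqP; rewrite eq_sym; apply: contraFT cNP => gc.
  by apply: (subsetP g_sup); rewrite inE.
rewrite /monomial (partition_big (porbit s) (mem P)) /= => [|x _].
  2: exact: mem_porbits.
apply: eq_bigr => c cP; apply: eq_big => [x|x /eqP <-]; last by rewrite ffunE.
by case/imsetP: cP => y _ ->; rewrite eq_porbit_mem.
Qed.

End Colourings.

Section TranspositionSums.
Variables (R : comNzRingType) (N : nat) (T : finType) (s : {perm T}).
Hypothesis N_gt0 : (0 < N)%N.
Local Notation MP := {mpoly R[N]}.
Local Notation p := (psum R N).
Local Notation Q := (@psum_perm R N T).
Local Notation colouring := {ffun T -> 'I_N}.
Local Notation rest c := (\prod_(c' in porbits s :\ c) p #|c'|).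
Local Notation defect c := (cut_defect R N #|c| * rest c).

Lemma Dstar_diag_psum_perm : Dstar_diag (Q s) =
  \sum_(f | const_on_cycles s f)
    (\sum_k \sum_(l | l != k) (f k == f l))%:R * monomial R f.
Proof.
have mderiv_sum i (F : colouring -> MP) :
    mderiv i (\sum_(f | const_on_cycles s f) F f) =
    \sum_(f | const_on_cycles s f) mderiv i (F f).
  by apply: big_morph; [exact: mderivD | exact: mderiv0].
rewrite /psum_perm /Dstar_diag.
under eq_bigr => i _ do rewrite !mderiv_sum big_distrr.
by rewrite exchange_big; apply: eq_bigr => f _; rewrite -Dstar_diag_monomial.
Qed.

(* If [l] is off the cycle of [k], the colourings constant on the cycles of
   [tperm k l * s] are those of [s] with [f k = f l]; if [l] is on it, all
   colourings constant on the cycles of [s] satisfy [f k = f l]. *)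
Lemma psum_perm_tperm_mul k l : Q (tperm k l * s)%g =
  \sum_(f | const_on_cycles s f && (f k == f l)) monomial R f +
  (if l \in porbit s k then Q (tperm k l * s)%g - Q s else 0).
Proof.
set J := \sum_(f : colouring | const_on_cycles s f && (f k == f l)) monomial R f.
have J_tperm : J =
    \sum_(f | const_on_cycles (tperm k l * s)%g f && (f k == f l)) monomial R f.
  apply: eq_bigl => f; have [/eqP fkl|] := boolP (f k == f l).
    2: by rewrite !andbF.
  rewrite !andbT.
  by have [? ?] := const_tperm_mul s fkl; apply/const_on_cyclesP/const_on_cyclesP.
case: ifP => [lk|/negbT lNk].
  suff -> : J = Q s by rewrite addrC subrK.
  apply: eq_bigl => f; apply: andb_idr => /const_on_cyclesP fs.
  by rewrite (const_porbit fs lk).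
rewrite addr0 {1}/psum_perm (bigID (fun f : colouring => f k == f l)) /=.
rewrite -J_tperm big_pred0 ?addr0 // => f; apply/negP.
by case/andP=> /const_on_cyclesP fs /negP []; rewrite (const_tperm_mul_merge lNk fs).
Qed.

Lemma psum_perm_cut k d : (0 < d)%N -> (d < #|porbit s k|)%N ->
  Q (tperm k ((s ^+ d)%g k) * s)%g - Q s =
  (p d * p (#|porbit s k| - d) - p #|porbit s k|) * rest (porbit s k).
Proof.
move=> d_gt0 d_lt; rewrite !psum_permE // /psum_prod big_porbits_tperm_split //.
by rewrite (big_setD1 _ (mem_porbits s k)) /= mulrA mulrBl.
Qed.

Lemma sum_psum_perm_cut k :
  \sum_(l | (l != k) && (l \in porbit s k)) (Q (tperm k l * s)%g - Q s) =
  defect (porbit s k).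
Proof.
set C := porbit s k; rewrite (eq_bigl (mem (C :\ k))) => [|l].
  2: by rewrite !inE.
have C_k : C :\ k = [set (s ^+ d)%g k | d : 'I_#|C| & (0 < d)%N].
  apply/setP => l; rewrite !inE andbC.
  apply/andP/imsetP => [[/porbitPlt [d dlt ->] lk]|[d]].
    exists (Ordinal dlt); rewrite // inE lt0n.
    by apply: contra lk => /eqP /= ->; rewrite expg0 perm1.
  rewrite inE => d_gt0 ->; split; first exact: mem_porbit.
  have := permX_porbit_inj (ltn_ord d) (card_porbit_gt0 s k).
  by rewrite expg0 perm1 => inj; apply: contraTneq d_gt0 => /inj ->.
rewrite C_k big_imset /= => [|d1 d2 _ _ /permX_porbit_inj]; last first.
  by move=> /(_ (ltn_ord d1) (ltn_ord d2)) /val_inj.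
rewrite /cut_defect big_distrl /=; apply: eq_big => [d|d]; first by rewrite inE.
by rewrite inE => d_gt0; rewrite psum_perm_cut.
Qed.

Lemma sum_porbit (V : nmodType) (F : {set T} -> V) :
  \sum_k F (porbit s k) = \sum_(c in porbits s) F c *+ #|c|.
Proof.
rewrite (partition_big (porbit s) (mem (porbits s))) /= => [|k _].
  2: exact: mem_porbits.
apply: eq_bigr => c sc; rewrite (eq_bigr (fun=> F c)) => [|k /eqP -> //].
rewrite sumr_const; congr (_ *+ _); apply: eq_card => k.
by case/imsetP: sc => y _ ->; exact: eq_porbit_mem.
Qed.

Lemma sum_psum_perm_tperm_mul :
  \sum_k \sum_(l | l != k) Q (tperm k l * s)%g =
  Dstar_diag (Q s) + \sum_(c in porbits s) defect c *+ #|c|.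
Proof.
under eq_bigr => k _ do under eq_bigr => l _ do rewrite psum_perm_tperm_mul.
under eq_bigr => k _ do rewrite big_split /= -big_mkcondr sum_psum_perm_cut.
rewrite big_split /= (sum_porbit (fun c => defect c)) Dstar_diag_psum_perm.
congr (_ + _).
have mkcond k l :
    \sum_(f : colouring | const_on_cycles s f && (f k == f l)) monomial R f =
    \sum_(f | const_on_cycles s f) (f k == f l)%:R * monomial R f.
  rewrite big_mkcondr; apply: eq_bigr => f _.
  by case: (f k == f l); rewrite ?mul1r ?mul0r.
under eq_bigr => k _ do under eq_bigr => l _ do rewrite mkcond.
under eq_bigr => k _ do rewrite exchange_big /=.
rewrite exchange_big /=; apply: eq_bigr => f _.
rewrite natr_sum big_distrl /=; apply: eq_bigr => k _.
by rewrite natr_sum big_distrl.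
Qed.

Lemma sum_psum_prod_quot_porbits :
  \sum_i \sum_(j | j != i) psum_prod_quot R i j (porbits s) =
  (#|T| * (N - 1))%:R * Q s *+ 2 + \sum_(c in porbits s) defect c *+ #|c|.
Proof.
rewrite sum_psum_prod_quot psum_permE // -(sum_card_porbits s) big_distrl.
rewrite natr_sum !big_distrl -sumrMnl -big_split /=; apply: eq_bigr => c sc.
have /andP [c_gt0 _] := card_porbits_bounds sc.
rewrite sum_psum_conv // /psum_prod (big_setD1 c sc) /= natrM natrB // -mulr_natl.
ring.
Qed.

Definition Dstar_perm : MP :=
  Dstar_diag (Q s) + \sum_i \sum_(j | j != i) psum_prod_quot R i j (porbits s).

Lemma Dstar_is_psum_perm : Dstar_is (Q s) Dstar_perm.
Proof.
exists (fun i j => psum_prod_quot R i j (porbits s)); split=> // i j _.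
by rewrite psum_prod_quotP psum_permE.
Qed.

Lemma Dstar_permE : Dstar_perm =
  Q s *+ (#|T| * (N - 1)) *+ 2 + \sum_k \sum_(l | l != k) Q (tperm k l * s)%g.
Proof.
rewrite /Dstar_perm sum_psum_prod_quot_porbits sum_psum_perm_tperm_mul.
by rewrite addrCA mulr_natl.
Qed.

End TranspositionSums.

Section SymmetricGroup.
Variable n : nat.
Implicit Types (s : 'S_n) (lam sig : mult_vec n).

Lemma sum_tperm_pairs (V : nmodType) (F : 'S_n -> V) :
  \sum_(k < n) \sum_(l < n | l != k) F (tperm k l) =
  (\sum_(t | is_transposition t) F t) *+ 2.
Proof.
rewrite pair_big_dep /=.
rewrite (partition_big (fun kl => tperm kl.1 kl.2) (@is_transposition n)) /=.
  2: by move=> [k l] /= lk; apply/existsP; exists k; apply/existsP; exists l;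
     rewrite eq_sym lk eqxx.
rewrite -sumrMnl; apply: eq_bigr => t /existsP [x /existsP [y /andP [xy /eqP te]]].
rewrite (eq_bigr (fun=> F t)) => [|kl /andP [_ /eqP ->] //].
rewrite (eq_bigl (mem [set (x, y); (y, x)])) => [|[k l] /=]; last first.
  rewrite !inE te !xpair_eqE.
  apply/andP/orP => [[lk /eqP tkl]|[] /andP [/eqP -> /eqP ->]].
    have lE : l = tperm x y k by rewrite -tkl tpermL.
    move: lE lk; case: tpermP => [->|->|_ _] -> lk.
    - by left; rewrite !eqxx.
    - by right; rewrite !eqxx.
    - by rewrite eqxx in lk.
  - by rewrite eq_sym xy.
  - by rewrite xy tpermC.
by rewrite big_setU1 ?big_set1 ?mulr2n //= inE xpair_eqE negb_and xy.
Qed.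

Lemma psum_part_cycle_type (R : comNzRingType) (N : nat) s : (0 < N)%N ->
  psum_part R N (cycle_type s) = psum_perm R N s.
Proof.
move=> N_gt0; rewrite psum_permE // /psum_prod (big_porbits_by_size _ s (psum R N)).
by apply: eq_bigr => i _; rewrite prodr_const cycle_typeE.
Qed.

Lemma A_entry_witness lam : (0 < n)%N -> is_partition lam ->
  exists2 a : 'S_n, cycle_type a = lam & forall sig, A_entry lam sig =
    #|[set t | is_transposition t && (cycle_type (t * a)%g == sig)]|.
Proof.
move=> n_gt0 /(cycle_type_exists n_gt0) [a0 a0_lam].
rewrite /A_entry; case: pickP => [a /eqP a_lam|no_a]; first by exists a.
by have := no_a a0; rewrite /= a0_lam eqxx.
Qed.

Lemma sum_A_entry_psum_part (R : comNzRingType) (N : nat) lam (a : 'S_n) :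
  (forall sig, A_entry lam sig =
     #|[set t | is_transposition t && (cycle_type (t * a)%g == sig)]|) ->
  \sum_(sig | is_partition sig) (A_entry lam sig)%:R *: psum_part R N sig =
  \sum_(t | is_transposition t) psum_part R N (cycle_type (t * a)%g).
Proof.
move=> A_lam.
rewrite (partition_big (fun t => cycle_type (t * a)%g) (@is_partition n)) /=.
  2: by move=> t _; apply: cycle_type_partition.
apply: eq_bigr => sig _; rewrite A_lam scaler_nat -sumr_const.
rewrite (eq_bigr (fun=> psum_part R N sig)) => [|t /andP [_ /eqP <-] //].
by apply: eq_bigl => t; rewrite inE.
Qed.

End SymmetricGroup.

Unset Implicit Arguments.

Theorem mainTheorem8 (R : numFieldType) (n N : nat) :
  (1 <= n)%N -> (n < N)%N ->
  forall sig : mult_vec n, is_partition sig ->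
  exists q : {mpoly R[N]},
    Dstar_is (psum_part R N sig) q /\
    2%:R^-1 *: q =
      (n * (N - 1))%:R *: psum_part R N sig
      + \sum_(lam : mult_vec n | is_partition lam)
          (A_entry sig lam)%:R *: psum_part R N lam.
Proof.
move=> n_gt0 n_lt_N sig sig_part; have N_gt0 := leq_ltn_trans (leq0n n) n_lt_N.
have [a a_sig A_sig] := A_entry_witness n_gt0 sig_part.
rewrite (sum_A_entry_psum_part R N A_sig) -a_sig !psum_part_cycle_type //.
under eq_bigr => t _ do rewrite psum_part_cycle_type //.
exists (Dstar_perm R N a); split; first exact: Dstar_is_psum_perm.
rewrite Dstar_permE // card_ord.
rewrite (sum_tperm_pairs (fun t => psum_perm R N (t * a)%g)) -mulrnDl.
by rewrite -scaler_nat scalerA mulVf ?pnatr_eq0 // scale1r scaler_nat.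
Qed.
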